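(* There exists a Lipschitz function $f:[-1,1]\to\mathbb{R}$ (i.e. $|f(x)-f(y)|\le \kappa|x-y|$ for some constant $\kappa$ and all $x,y\in[-1,1]$) such that \[ \limsup_{n\to\infty}\frac{n}{\log n}\,\|B_n(f)-f\|_\infty>0, \] where $\|g\|_\infty=\sup_{x\in[-1,1]}|g(x)|$.
   Context: For $n\ge 1$ the equally spaced nodes are $x_{k,n}:=2k/n-1$, $k=0,\dots,n$. Berrut's barycentric interpolant of $f:[-1,1]\to\mathbb{R}$ is \[ B_n(f,x):=\frac{N_n(f,x)}{D_n(x)}\ \text{ for } x\notin\{x_{0,n},\dots,x_{n,n}\},\qquad B_n(f,x_{k,n}):=f(x_{k,n}), \] where $N_n(f,x)=\sum_{k=0}^n(-1)^k\frac{f(x_{k,n})}{x-x_{k,n}}$ and $D_n(x)=\sum_{k=0}^n(-1)^k\frac{1}{x-x_{k,n}}$. $B_n(f)$ denotes the function $x\mapsto B_n(f,x)$ on $[-1,1]$. *)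

From HB Require Import structures.
From mathcomp Require Import all_boot all_order all_algebra.
From mathcomp Require Import all_classical all_reals all_analysis.
Set Implicit Arguments. Unset Strict Implicit. Unset Printing Implicit Defensive.
Import Order.TTheory GRing.Theory Num.Theory.
Local Open Scope ring_scope.

Section Berrut.
Variable R : realType.

Definition node (n k : nat) : R := 2 * k%:R / n%:R - 1.

Definition berrutN (f : R -> R) (n : nat) (x : R) : R :=
  \sum_(k < n.+1) (-1) ^+ k * f (node n k) / (x - node n k).

Definition berrutD (n : nat) (x : R) : R :=
  \sum_(k < n.+1) (-1) ^+ k / (x - node n k).

Definition berrut (f : R -> R) (n : nat) (x : R) : R :=
  if [exists k : 'I_n.+1, x == node n k] then f x
  else berrutN f n x / berrutD n x.

Definition supnorm (g : R -> R) : \bar R :=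
  ereal_sup [set (`|g x|)%:E | x in [set x : R | -1 <= x <= 1]].

Definition lipschitz_on_I (f : R -> R) : Prop :=
  exists kappa : R, forall x y : R, -1 <= x <= 1 -> -1 <= y <= 1 ->
    `|f x - f y| <= kappa * `|x - y|.

End Berrut.

From HB Require Import structures.
From mathcomp Require Import all_boot all_order all_algebra.
From mathcomp Require Import all_classical all_reals all_analysis.
From mathcomp Require Import ring lra zify.
Import Order.TTheory GRing.Theory Num.Theory.
Local Open Scope ring_scope.

(* The function is the distance to a closed set whose complement contains the
   blocks (1 - 2^-m, 1 - 2^-m + 2^-m/4).  On block m it is a sawtooth whose
   teeth have half-width and height equal to the node spacing 2/n of B_n,
   n = nodes m, and it vanishes on a gap just before the block.  At the point
   x half a spacing before the block, f x = 0 and B_n(f, x) = N_n(f, x) / D_n(x).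
   The denominator is a difference of two alternating sums of decreasing
   terms, so |D_n(x)| <= 2n.  In the numerator the teeth contribute half a
   harmonic sum, at least (ln teeth)/2, while by summation by parts the nodes
   outside the gap and the block contribute O(4^m).  With teeth = 2^c and c a
   large multiple of 4^m, ln teeth is comparable to ln n, which gives
   n / ln n * |B_n(f, x) - f x| >= 1/16 along n = nodes m. *)

Section AlternatingSums.
Context {R : realFieldType}.
Implicit Types (phi a : nat -> R) (M d : R).

Lemma signrD_even (k q : nat) : ~~ odd q -> (-1) ^+ (k + q) = (-1) ^+ k :> R.
Proof. by move=> q_even; rewrite -signr_odd oddD (negbTE q_even) addbF signr_odd. Qed.

Lemma signrB_even (k q : nat) : ~~ odd q -> (k < q)%N ->
  (-1) ^+ (q - k.+1) = - (-1) ^+ k :> R.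
Proof.
move=> q_even lt_kq; rewrite -signr_odd oddB // (negbTE q_even) /= -[in RHS]signr_odd.
by case: (odd k); rewrite /= ?expr0 ?expr1 ?opprK.
Qed.

Lemma alternating_sum_le_variation phi M d N : 0 <= M -> 0 <= d ->
  (forall i, (i < N)%N -> `|phi i| <= M) ->
  (forall i, (i.+1 < N)%N -> `|phi i.+1 - phi i| <= d) ->
  `|\sum_(0 <= i < N) (-1) ^+ i * phi i| <= M + N%:R * d.
Proof.
move=> M0 d0 phiM phid; case: N phiM phid => [|N] phiM phid.
  by rewrite big_geq // normr0 mul0r addr0.
pose T k := 2 * \sum_(0 <= i < k.+1) (-1) ^+ i * phi i - (-1) ^+ k * phi k.
(* Abel summation: [T k.+1 - T k = (-1)^k (phi k - phi k.+1)]. *)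
have T_le k : (k <= N)%N -> `|T k| <= M + k%:R * d.
  elim: k => [|k IH] le_kN.
    rewrite /T big_nat1 expr0 !mul1r mul0r addr0.
    by rewrite (_ : 2 * phi 0%N - phi 0%N = phi 0%N) ?phiM //; ring.
  have -> : T k.+1 = T k + (-1) ^+ k * (phi k - phi k.+1).
    by rewrite /T big_nat_recr //= exprS; ring.
  rewrite (le_trans (ler_normD _ _)) // normrM normrX normrN1 expr1n mul1r.
  rewrite [`|phi k - _|]distrC -natr1 mulrDl mul1r addrA.
  by rewrite lerD ?IH ?phid ?(ltnW le_kN).
have := T_le N (leqnn N); rewrite /T -natr1.
set S := \sum_(_ <= _ < _) _ => T_le_N.
have : `|2 * S| <= 2 * M + N%:R * d.
  rewrite (_ : 2 * S = (2 * S - (-1) ^+ N * phi N) + (-1) ^+ N * phi N); last by ring.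
  rewrite (le_trans (ler_normD _ _)) // normrM normrX normrN1 expr1n mul1r.
  by have := phiM N (ltnSn N); lra.
rewrite normrM ger0_norm //; have : 0 <= N%:R * d by rewrite mulr_ge0.
lra.
Qed.

Lemma alternating_sum_nonincreasing_bounds a N :
  (forall i, 0 <= a i) -> (forall i, a i.+1 <= a i) ->
  0 <= \sum_(0 <= i < N) (-1) ^+ i * a i <= a 0%N.
Proof.
elim: N a => [|N IH] a a_ge0 a_decr; first by rewrite big_geq // lexx a_ge0.
rewrite big_nat_recl // expr0 mul1r.
under eq_bigr do rewrite exprS mulN1r mulNr.
rewrite sumrN.
have /andP[] := IH (fun i => a i.+1) (fun i => a_ge0 i.+1) (fun i => a_decr i.+1).
by have := a_decr 0%N; have := a_ge0 1%N; lra.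
Qed.

Lemma alternating_sum_nonincreasing_ge a N :
  (forall i, 0 <= a i) -> (forall i, a i.+1 <= a i) ->
  a 0%N - a 1%N <= \sum_(0 <= i < N.+2) (-1) ^+ i * a i.
Proof.
move=> a_ge0 a_decr; rewrite big_nat_recl // expr0 mul1r.
under eq_bigr do rewrite exprS mulN1r mulNr.
rewrite sumrN.
have /andP[] := alternating_sum_nonincreasing_bounds (fun i => a i.+1) N.+1
  (fun i => a_ge0 i.+1) (fun i => a_decr i.+1).
lra.
Qed.

Lemma dist_quotient_le (a b u v g d beta : R) : 0 < g -> g <= `|u| -> g <= `|v| ->
  `|a - b| <= d -> `|u - v| <= d -> `|b| <= beta ->
  `|a / u - b / v| <= d / g + beta * d / g ^+ 2.
Proof.
move=> g0 gu gv ab_le uv_le b_le.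
have u0 : 0 < `|u| by apply: lt_le_trans gu.
have v0 : 0 < `|v| by apply: lt_le_trans gv.
have d0 : 0 <= d := le_trans (normr_ge0 _) ab_le.
have -> : a / u - b / v = (a - b) / u + b * (v - u) / (u * v).
  by field; rewrite -!normr_gt0 u0 v0.
rewrite (le_trans (ler_normD _ _)) // lerD //.
  rewrite normrM normfV ler_pdivrMr // (le_trans ab_le) //.
  by rewrite -[X in X <= _](divfK (lt0r_neq0 g0) d) ler_wpM2l // divr_ge0 // ltW.
rewrite normrM normfV !normrM ler_pdivrMr ?mulr_gt0 // [`|v - u|]distrC.
apply: (le_trans (ler_pM (normr_ge0 _) (normr_ge0 _) b_le uv_le)).
rewrite -[X in X <= _](divfK (_ : g ^+ 2 != 0)) ?expf_neq0 ?gt_eqF //.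
have bd0 : 0 <= beta * d by rewrite mulr_ge0 // (le_trans _ b_le).
by rewrite ler_wpM2l ?divr_ge0 ?exprn_ge0 ?(ltW g0) // expr2 ler_pM // ltW.
Qed.

Lemma alternating_quotient_sum_le (phi y : nat -> R) (x g d beta : R) N :
  0 < g -> 0 <= d -> 0 <= beta ->
  (forall i, (i < N)%N -> g <= `|x - y i|) ->
  (forall i, (i < N)%N -> `|phi i| <= beta) ->
  (forall i, (i.+1 < N)%N -> `|phi i.+1 - phi i| <= d) ->
  (forall i, (i.+1 < N)%N -> `|y i.+1 - y i| <= d) ->
  `|\sum_(0 <= i < N) (-1) ^+ i * (phi i / (x - y i))|
    <= beta / g + N%:R * (d / g + beta * d / g ^+ 2).
Proof.
move=> g0 d0 beta0 y_far phi_le phi_lip y_lip.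
have g_ge0 := ltW g0.
apply: alternating_sum_le_variation.
- by rewrite divr_ge0.
- by rewrite addr_ge0 ?divr_ge0 ?mulr_ge0 ?exprn_ge0.
- move=> i lt_iN; have gy := y_far i lt_iN.
  rewrite normrM normfV ler_pdivrMr ?(lt_le_trans g0) // (le_trans (phi_le i lt_iN)) //.
  by rewrite -[X in X <= _](divfK (lt0r_neq0 g0) beta) ler_wpM2l // divr_ge0.
- move=> i lt_iN; apply: dist_quotient_le => //.
  + by apply: y_far; lia.
  + by apply: y_far; lia.
  + exact: phi_lip.
  + by rewrite (_ : x - y i.+1 - (x - y i) = - (y i.+1 - y i)) ?normrN ?y_lip //; ring.
  + by apply: phi_le; lia.
Qed.

End AlternatingSums.

Section Logarithms.
Context {R : realType}.

Lemma ln_le_harmonic (L : nat) :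
  ln (L%:R + 1 : R) <= \sum_(0 <= t < L) (t%:R + 1)^-1.
Proof.
elim: L => [|L IH]; first by rewrite big_geq // add0r ln1.
rewrite big_nat_recr //= -natr1.
have L1_gt0 : 0 < L%:R + 1 :> R by rewrite ltr_pwDr.
have -> : L%:R + 1 + 1 = (L%:R + 1) * (1 + (L%:R + 1)^-1) :> R.
  by field; rewrite lt0r_neq0.
rewrite lnM ?posrE ?L1_gt0 ?addr_gt0 ?invr_gt0 //; apply: lerD => //.
by apply: le_ln1Dx; rewrite (@lt_trans _ _ 0) ?ltrN10 ?invr_gt0.
Qed.

Lemma half_le_ln2 : 1 / 2 <= ln (2 : R).
Proof.
have := @le_ln1Dx R (- 2^-1); rewrite (_ : 1 + - 2^-1 = 2^-1); last by field.
rewrite lnV ?posrE // lerN2 mul1r; apply; lra.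
Qed.

Lemma ln2_le1 : ln (2 : R) <= 1.
Proof. by have := @le_ln1Dx R 1; rewrite (_ : 1 + 1 = 2) //; apply; lra. Qed.

End Logarithms.

Section DistanceToSet.
Local Open Scope classical_set_scope.
Context {R : realType} (A : set R).

Definition dist_set (t : R) : R := inf [set `|t - e| | e in A].

Lemma dist_set_le t e : A e -> dist_set t <= `|t - e|.
Proof. by move=> Ae; apply: ge_inf; [exists 0 => _ [? _ <-] | exists e]. Qed.

Hypothesis A_neq0 : A !=set0.

Lemma dist_set_ge t c : (forall e, A e -> c <= `|t - e|) -> c <= dist_set t.
Proof.
move=> c_le; have [e Ae] := A_neq0.
by apply: lb_le_inf; [exists `|t - e|, e | move=> _ [e' Ae' <-]; exact: c_le].
Qed.

Lemma dist_set_ge0 t : 0 <= dist_set t.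
Proof. exact: dist_set_ge. Qed.

Lemma dist_set_eq0 t : A t -> dist_set t = 0.
Proof.
move=> At; apply/le_anti; rewrite dist_set_ge0 andbT.
by have := dist_set_le t t At; rewrite subrr normr0.
Qed.

Lemma dist_set_lipschitz x y : `|dist_set x - dist_set y| <= `|x - y|.
Proof.
have le_add a b : dist_set a - `|a - b| <= dist_set b.
  apply: dist_set_ge => e Ae; rewrite lerBlDr; apply: le_trans (dist_set_le a e Ae) _.
  by rewrite (_ : a - e = (b - e) + (a - b)) ?ler_normD //; ring.
by rewrite ler_norml; have := le_add x y; have := le_add y x; rewrite distrC; lra.
Qed.

End DistanceToSet.

(* [1024 * 4 ^ m] bounds the contribution of the nodes outside the gap and the
   block; the factor 8 makes ln (teeth m) dominate ln (nodes m). *)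
Definition tooth_exp (m : nat) : nat := 8 * (1024 * 4 ^ m + m + 4).
Definition teeth (m : nat) : nat := 2 ^ tooth_exp m.
Definition nodes (m : nat) : nat := 16 * 2 ^ m * teeth m.
Definition block_idx (m : nat) : nat := nodes m - 8 * teeth m.

Lemma teeth_gt0 m : (0 < teeth m)%N.
Proof. by rewrite expn_gt0. Qed.

Lemma nodes_gt0 m : (0 < nodes m)%N.
Proof. by rewrite !muln_gt0 expn_gt0 teeth_gt0. Qed.

Lemma nodes_sub_even m c : ~~ odd (nodes m - c * teeth m).
Proof.
have teeth_even : ~~ odd (teeth m) by rewrite oddX /tooth_exp; lia.
have [le_cN | lt_Nc] := leqP (c * teeth m) (nodes m); last first.
  by rewrite (eqP (ltnW lt_Nc)).
by rewrite oddB // !oddM (negbTE teeth_even) !andbF.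
Qed.

Section Sawtooth.
Local Open Scope classical_set_scope.
Context {R : realType}.

Definition block_start (m : nat) : R := 1 - 2 ^- m.
Definition block_len (m : nat) : R := 2 ^- m / 4.
Definition spacing (m : nat) : R := 2 ^- m / (8 * (teeth m)%:R).

(* Inside the m-th block consecutive zeros are [2 * spacing m] apart, so the
   distance to the zero set is a sawtooth with [teeth m] teeth of height
   [spacing m] there; outside the blocks it vanishes. *)
Definition sawtooth_zeros : set R := [set t |
  (forall m, ~ (block_start m < t < block_start m + block_len m)) \/
  exists m i, (i <= teeth m)%N /\ t = block_start m + 2 * i%:R * spacing m].

Definition sawtooth : R -> R := dist_set sawtooth_zeros.

Definition probe (m : nat) : R := block_start m - spacing m / 2.

Lemma pow2V_gt0 m : 0 < 2 ^- m :> R.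
Proof. by rewrite invr_gt0 exprn_gt0. Qed.

Lemma pow2V_le1 m : 2 ^- m <= 1 :> R.
Proof. by rewrite invf_le1 ?exprn_gt0 // exprn_ege1 // ler1n. Qed.

Lemma pow2V_halve m m' : (m < m')%N -> 2 * 2 ^- m' <= 2 ^- m :> R.
Proof.
move=> lt_mm'; have le_2m : 2 * 2 ^+ m <= 2 ^+ m' :> R.
  by rewrite -exprS ler_eXn2l // ltr1n.
by rewrite ler_pdivrMr ?exprn_gt0 // ler_pdivlMl ?exprn_gt0 // mulrC.
Qed.

Lemma spacing_gt0 m : 0 < spacing m.
Proof. by rewrite divr_gt0 ?pow2V_gt0 // mulr_gt0 // ltr0n teeth_gt0. Qed.

Lemma teeth_spacing m : (teeth m)%:R * spacing m = 2 ^- m / 8.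
Proof. by rewrite /spacing; field; rewrite expf_neq0 // pnatr_eq0 -lt0n teeth_gt0. Qed.

Lemma spacing_le m : spacing m <= 2 ^- m / 8.
Proof.
rewrite -teeth_spacing; apply: ler_peMl; first exact: ltW (spacing_gt0 m).
by rewrite ler1n teeth_gt0.
Qed.

Lemma nodes_spacing m : (nodes m)%:R * spacing m = 2.
Proof.
rewrite /nodes /spacing !natrM natrX; field.
by rewrite pnatr_eq0 -lt0n teeth_gt0 expf_neq0.
Qed.

Lemma node_nodes m k : node R (nodes m) k = k%:R * spacing m - 1.
Proof.
rewrite /node -(nodes_spacing m); field.
by rewrite pnatr_eq0 -lt0n nodes_gt0.
Qed.

Lemma nodes_sub_teeth_spacing m c : (c <= 16)%N ->
  (nodes m - c * teeth m)%:R * spacing m = 2 - c%:R * 2 ^- m / 8.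
Proof.
move=> le_c16; rewrite natrB; last by rewrite /nodes leq_mul2r; nia.
by rewrite mulrBl nodes_spacing natrM -mulrA teeth_spacing mulrA.
Qed.

Lemma node_block_idx m k :
  node R (nodes m) (k + block_idx m) = block_start m + k%:R * spacing m.
Proof.
rewrite node_nodes natrD mulrDl nodes_sub_teeth_spacing // /block_start.
by field.
Qed.

Lemma probe_gap m : block_start m - 2 ^- m / 2 <= probe m < block_start m.
Proof.
have := spacing_gt0 m; have := spacing_le m; have := pow2V_gt0 m.
by rewrite /probe => *; apply/andP; split; lra.
Qed.

Lemma probe_in_interval m : -1 <= probe m <= 1.
Proof.
have := spacing_gt0 m; have := spacing_le m; have := pow2V_gt0 m; have := pow2V_le1 m.
by rewrite /probe /block_start => *; apply/andP; split; lra.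
Qed.

Lemma block_sep {m m' : nat} : (m < m')%N ->
  block_start m + block_len m + 2 ^- m' / 2 <= block_start m'.
Proof. by move/pow2V_halve; rewrite /block_start /block_len; lra. Qed.

Lemma sawtooth_zeros_N1 : sawtooth_zeros (-1).
Proof.
left=> m /andP[+ _]; rewrite /block_start.
by have := pow2V_le1 m; lra.
Qed.

Lemma sawtooth_zeros_neq0 : sawtooth_zeros !=set0.
Proof. by exists (-1); exact: sawtooth_zeros_N1. Qed.

Lemma sawtooth_zeros_gap m y :
  block_start m - 2 ^- m / 2 <= y < block_start m -> sawtooth_zeros y.
Proof.
move=> /andP[le_y lt_y]; left=> m' /andP[lt_y' y_lt].
case: (ltngtP m' m) => [lt_m'm | lt_mm' | eq_m'm].
- by have := block_sep lt_m'm; lra.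
- by have := block_sep lt_mm'; have := pow2V_gt0 m'; rewrite /block_len; lra.
- by subst m'; lra.
Qed.

Lemma sawtooth_zeros_in_block m e : sawtooth_zeros e ->
  block_start m < e < block_start m + block_len m ->
  exists2 i, (i <= teeth m)%N & e = block_start m + 2 * i%:R * spacing m.
Proof.
move=> [outside /outside // | [m' [i [le_iL ->]]]] e_in.
have in_block' : block_start m' <= block_start m' + 2 * i%:R * spacing m'
    <= block_start m' + block_len m'.
  have ih_ge0 : 0 <= i%:R * spacing m' by rewrite mulr_ge0 // ltW // spacing_gt0.
  have ih_le : i%:R * spacing m' <= 2 ^- m' / 8.
    by rewrite -teeth_spacing ler_wpM2r ?ler_nat // ltW // spacing_gt0.
  by apply/andP; split; rewrite /block_len; lra.
case: (ltngtP m' m) e_in in_block' => [lt_m'm | lt_mm' | <-].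
- by have := block_sep lt_m'm; have := pow2V_gt0 m; lra.
- by have := block_sep lt_mm'; have := pow2V_gt0 m'; lra.
- by exists i.
Qed.

Lemma sawtooth_ge0 t : 0 <= sawtooth t.
Proof. exact: dist_set_ge0 sawtooth_zeros_neq0 t. Qed.

Lemma sawtooth_eq0 t : sawtooth_zeros t -> sawtooth t = 0.
Proof. exact: dist_set_eq0 sawtooth_zeros_neq0 t. Qed.

Lemma sawtooth_lipschitz x y : `|sawtooth x - sawtooth y| <= `|x - y|.
Proof. exact: dist_set_lipschitz sawtooth_zeros_neq0 x y. Qed.

Lemma sawtooth_le t : sawtooth t <= `|t + 1|.
Proof. by rewrite -[1]opprK; apply: dist_set_le; exact: sawtooth_zeros_N1. Qed.

Lemma sawtooth_tooth m i : (i < teeth m)%N ->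
  spacing m <= sawtooth (block_start m + (2 * i%:R + 1) * spacing m).
Proof.
move=> lt_iL; apply: dist_set_ge sawtooth_zeros_neq0 _ _ _ => e ze.
have h0 := spacing_gt0 m.
have ih_ge0 : 0 <= i%:R * spacing m by rewrite mulr_ge0 // ltW.
have i1h_le : (i%:R + 1) * spacing m <= 2 ^- m / 8.
  by rewrite -teeth_spacing ler_wpM2r ?(ltW h0) // natr1 ler_nat.
rewrite ler_normr.
have [e_in | ] := boolP (block_start m < e < block_start m + block_len m).
  have [j _ ->] := sawtooth_zeros_in_block m e ze e_in.
  case: (leqP j i) => [le_ji | lt_ij].
    have : j%:R * spacing m <= i%:R * spacing m by rewrite ler_wpM2r ?(ltW h0) ?ler_nat.
    by move=> jh_le; apply/orP; left; lra.
  have : (i%:R + 1) * spacing m <= j%:R * spacing m.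
    by rewrite ler_wpM2r ?(ltW h0) // natr1 ler_nat.
  by move=> jh_ge; apply/orP; right; lra.
rewrite negb_and -!leNgt /block_len => /orP[e_le | e_ge]; apply/orP; [left | right]; lra.
Qed.

Lemma sawtooth_node_le2 m k : (k <= nodes m)%N -> `|sawtooth (node R (nodes m) k)| <= 2.
Proof.
move=> le_kN; have h0 := spacing_gt0 m.
rewrite ger0_norm ?sawtooth_ge0 // (le_trans (sawtooth_le _)) //.
rewrite node_nodes subrK ger0_norm ?mulr_ge0 ?(ltW h0) //.
by rewrite -(nodes_spacing m) ler_wpM2r ?(ltW h0) // ler_nat.
Qed.

Lemma sawtooth_alternating_le m (x g : R) k0 N :
  0 < g -> (k0 + N <= (nodes m).+1)%N ->
  (forall i, (i < N)%N -> g <= `|x - node R (nodes m) (k0 + i)|) ->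
  `|\sum_(0 <= i < N) (-1) ^+ i *
      (sawtooth (node R (nodes m) (k0 + i)) / (x - node R (nodes m) (k0 + i)))|
    <= 5 / g + 6 / g ^+ 2.
Proof.
move=> g0 le_N node_far; have h0 := spacing_gt0 m.
have node_step i :
    node R (nodes m) (k0 + i.+1) - node R (nodes m) (k0 + i) = spacing m.
  by rewrite !node_nodes addnS -natr1; ring.
apply: le_trans (alternating_quotient_sum_le
  (fun i => sawtooth (node R (nodes m) (k0 + i))) (fun i => node R (nodes m) (k0 + i))
  x g (spacing m) 2 N g0 (ltW h0) _ node_far _ _ _) _ => //.
- by move=> i lt_iN; apply: sawtooth_node_le2; lia.
- by move=> i _; rewrite (le_trans (sawtooth_lipschitz _ _)) // node_step gtr0_norm.
- by move=> i _; rewrite node_step gtr0_norm.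
have Nh_le3 : N%:R * spacing m <= 3.
  have : N%:R <= (nodes m)%:R + 1 :> R by rewrite natr1 ler_nat; lia.
  have := nodes_spacing m; have := spacing_le m; have := pow2V_le1 m.
  nra.
have : 0 <= g^-1 + 2 / g ^+ 2 by rewrite addr_ge0 ?divr_ge0 ?invr_ge0 ?exprn_ge0 ?(ltW g0).
nra.
Qed.

Definition probe_inv_dist (m i : nat) : R := ((i%:R + 2^-1) * spacing m)^-1.

Lemma probe_inv_dist_gt0 m i : 0 < probe_inv_dist m i.
Proof. by rewrite invr_gt0 mulr_gt0 ?spacing_gt0 // ltr_wpDl. Qed.

Lemma probe_inv_dist_decr m i : probe_inv_dist m i.+1 <= probe_inv_dist m i.
Proof.
have pos j : 0 < (j%:R + 2^-1) * spacing m by rewrite -invr_gt0 probe_inv_dist_gt0.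
by rewrite lef_pV2 ?posrE ?pos // ler_wpM2r ?(ltW (spacing_gt0 m)) // lerD2r ler_nat.
Qed.

Lemma probe_sub_node_above m i :
  probe m - node R (nodes m) (i + block_idx m) = - ((i%:R + 2^-1) * spacing m).
Proof. by rewrite node_block_idx /probe; ring. Qed.

Lemma probe_sub_node_below m i : (i < block_idx m)%N ->
  probe m - node R (nodes m) (block_idx m - i.+1) = (i%:R + 2^-1) * spacing m.
Proof.
move=> lt_i; rewrite node_nodes natrB // mulrBl nodes_sub_teeth_spacing //.
by rewrite /probe /block_start -natr1; field.
Qed.

Lemma berrutD_probe m : berrutD (nodes m) (probe m) =
  - (\sum_(0 <= i < block_idx m) (-1) ^+ i * probe_inv_dist m i)
  - (\sum_(0 <= i < (nodes m).+1 - block_idx m) (-1) ^+ i * probe_inv_dist m i).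
Proof.
have le_idx : (block_idx m <= (nodes m).+1)%N by rewrite /block_idx; lia.
rewrite /berrutD -(big_mkord xpredT (fun k => (-1) ^+ k / (probe m - node R (nodes m) k))).
rewrite (big_cat_nat _ le_idx) //=; congr (_ + _).
  rewrite big_nat_rev /= add0n -sumrN; apply: eq_big_nat => i /andP[_ lt_i].
  rewrite probe_sub_node_below // signrB_even ?nodes_sub_even //.
  by rewrite mulNr.
rewrite -{1}[block_idx m]add0n big_addn -sumrN; apply: eq_big_nat => i _.
by rewrite probe_sub_node_above signrD_even ?nodes_sub_even // invrN mulrN.
Qed.

Lemma berrutD_probe_bounds m :
  - (2 * (nodes m)%:R) <= berrutD (nodes m) (probe m) < 0.
Proof.
have a_ge0 i := ltW (probe_inv_dist_gt0 m i).
have a_decr := probe_inv_dist_decr m.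
have L_gt0 := teeth_gt0 m; have pow_gt0 : (0 < 2 ^ m)%N by rewrite expn_gt0.
have N_neq0 : (nodes m)%:R != 0 :> R by rewrite pnatr_eq0 -lt0n nodes_gt0.
have hE : spacing m = 2 / (nodes m)%:R by rewrite -(nodes_spacing m); field.
have a0 : probe_inv_dist m 0 = (nodes m)%:R by rewrite /probe_inv_dist hE; field.
have a1 : probe_inv_dist m 1 = (nodes m)%:R / 3 by rewrite /probe_inv_dist hE; field.
rewrite berrutD_probe.
have : (2 <= (nodes m).+1 - block_idx m)%N by rewrite /block_idx /nodes; nia.
have : (2 <= block_idx m)%N by rewrite /block_idx /nodes; nia.
case: ((nodes m).+1 - block_idx m)%N => [|[|q]] //; case: (block_idx m) => [|[|p]] // _ _.
have := alternating_sum_nonincreasing_ge (probe_inv_dist m) p a_ge0 a_decr.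
have := alternating_sum_nonincreasing_ge (probe_inv_dist m) q a_ge0 a_decr.
have /andP[_] := alternating_sum_nonincreasing_bounds (probe_inv_dist m) p.+2 a_ge0 a_decr.
have /andP[_] := alternating_sum_nonincreasing_bounds (probe_inv_dist m) q.+2 a_ge0 a_decr.
rewrite a0 a1; have : 0 < (nodes m)%:R :> R by rewrite ltr0n nodes_gt0.
lra.
Qed.

Lemma block_sum_ge m T : (T <= teeth m)%N ->
  (\sum_(0 <= t < T) (t%:R + 1)^-1) / 2 <=
  \sum_(0 <= i < T.*2) (-1) ^+ (i + block_idx m) *
    (sawtooth (node R (nodes m) (i + block_idx m)) /
       (probe m - node R (nodes m) (i + block_idx m))).
Proof.
have h0 := spacing_gt0 m.
elim: T => [|T IH] le_T; first by rewrite !big_geq // mul0r.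
rewrite big_nat_recr //= mulrDl doubleS !big_nat_recr //= -addrA.
apply: lerD; first exact: IH (ltnW le_T).
rewrite !signrD_even ?nodes_sub_even // !probe_sub_node_above !node_block_idx.
rewrite sawtooth_eq0; last by right; exists m, T; rewrite ltnW // -mul2n natrM mulrA.
rewrite mul0r mulr0 add0r exprS -signr_odd odd_double expr0 mulr1 mulN1r.
rewrite invrN mulrN opprK -[T.*2.+1%:R]natr1 -mul2n natrM.
have den_gt0 : 0 < 2 * T%:R + 1 + 2^-1 :> R by rewrite ltr_wpDl // ltr_wpDl ?mulr_ge0.
apply: (@le_trans _ _ (spacing m / ((2 * T%:R + 1 + 2^-1) * spacing m))).
  have T_ge0 : 0 <= T%:R :> R by [].
  by rewrite invfM mulrCA mulfV ?lt0r_neq0 // mulr1 -invfM lef_pV2 ?posrE //; lra.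
by rewrite ler_wpM2r ?invr_ge0 ?mulr_ge0 ?(ltW den_gt0) ?(ltW h0) // sawtooth_tooth.
Qed.

Lemma sawtooth_node_gap m k : (nodes m - 12 * teeth m <= k < block_idx m)%N ->
  sawtooth (node R (nodes m) k) = 0.
Proof.
move=> /andP[le_k lt_k]; apply/sawtooth_eq0/(@sawtooth_zeros_gap m).
have h0 := spacing_gt0 m.
have : (nodes m - 12 * teeth m)%:R * spacing m <= k%:R * spacing m.
  by rewrite ler_wpM2r ?(ltW h0) // ler_nat.
have : k.+1%:R * spacing m <= (block_idx m)%:R * spacing m.
  by rewrite ler_wpM2r ?(ltW h0) // ler_nat.
rewrite node_nodes /block_start /block_idx !nodes_sub_teeth_spacing // -[k.+1%:R]natr1.
by move=> *; apply/andP; split; lra.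
Qed.

Lemma far_nodes_bound_le m :
  2 * (5 / (2 ^- m / 4) + 6 / (2 ^- m / 4) ^+ 2) <= (1024 * 4 ^ m)%:R :> R.
Proof.
have p_ge1 : 1 <= 2 ^+ m :> R by rewrite exprn_ege1 // ler1n.
have -> : 2 * (5 / (2 ^- m / 4) + 6 / (2 ^- m / 4) ^+ 2)
          = 40 * 2 ^+ m + 192 * (2 ^+ m) ^+ 2 :> R.
  by field; rewrite expf_neq0.
rewrite natrM natrX (_ : 4%:R = 2 * 2 :> R) ?exprMn -?expr2; last by ring.
nra.
Qed.

Lemma berrutN_probe_ge m :
  ln ((teeth m)%:R + 1) / 2 - (1024 * 4 ^ m)%:R <= berrutN sawtooth (nodes m) (probe m).
Proof.
pose F k := (-1) ^+ k * (sawtooth (node R (nodes m) k) / (probe m - node R (nodes m) k)).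
have const_le := far_nodes_bound_le m; set g : R := 2 ^- m / 4 in const_le *.
have g_gt0 : 0 < g by rewrite divr_gt0 ?pow2V_gt0.
have h0 := spacing_gt0 m; have h_le := spacing_le m.
have L_gt0 := teeth_gt0 m; have pow_gt0 : (0 < 2 ^ m)%N by rewrite expn_gt0.
set gap := (nodes m - 12 * teeth m)%N; set fin := (nodes m - 6 * teeth m)%N.
have le_gap : (gap <= block_idx m)%N by rewrite /gap /block_idx; lia.
have le_block : (block_idx m <= fin)%N by rewrite /fin /block_idx; lia.
have le_fin : (fin <= (nodes m).+1)%N by rewrite /fin; lia.
have -> : berrutN sawtooth (nodes m) (probe m) = \sum_(0 <= k < (nodes m).+1) F k.
  by rewrite big_mkord; apply: eq_bigr => k _; rewrite /F mulrA.
rewrite (@big_cat_nat _ _ _ gap 0) ?(leq_trans le_gap (leq_trans le_block le_fin)) //.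
rewrite (@big_cat_nat _ _ _ (block_idx m) gap) ?(leq_trans le_block le_fin) //.
rewrite (@big_cat_nat _ _ _ fin (block_idx m)) //.
have far_below : `|\sum_(0 <= k < gap) F k| <= 5 / g + 6 / g ^+ 2.
  apply: (sawtooth_alternating_le m (probe m) g 0 gap g_gt0).
    by rewrite add0n /gap; lia.
  move=> i lt_i; rewrite add0n node_nodes /probe /block_start.
  have : i%:R * spacing m <= gap%:R * spacing m by rewrite ler_wpM2r ?(ltW h0) // ler_nat ltnW.
  rewrite nodes_sub_teeth_spacing // /g ler_normr => ih_le; apply/orP; left; lra.
have gap_zero : \sum_(gap <= k < block_idx m) F k = 0.
  rewrite big_nat_cond big1 // => k /andP[k_gap _].
  by rewrite /F sawtooth_node_gap ?mul0r ?mulr0.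
have block_ge : ln ((teeth m)%:R + 1) / 2 <= \sum_(block_idx m <= k < fin) F k.
  rewrite -{1}[block_idx m]add0n big_addn (_ : fin - block_idx m = (teeth m).*2)%N.
    by apply: le_trans (block_sum_ge m (teeth m) (leqnn _)); rewrite ler_pM2r ?ln_le_harmonic.
  by rewrite /fin /block_idx /nodes -muln2; nia.
have far_above : `|\sum_(fin <= k < (nodes m).+1) F k| <= 5 / g + 6 / g ^+ 2.
  rewrite -{1}[fin]add0n big_addn.
  under eq_bigr => i _ do rewrite /F signrD_even ?nodes_sub_even // addnC.
  apply: (sawtooth_alternating_le m (probe m) g fin _ g_gt0); first by lia.
  move=> i _; rewrite node_nodes /probe /block_start natrD mulrDl nodes_sub_teeth_spacing //.
  have : 0 <= i%:R * spacing m by rewrite mulr_ge0 ?(ltW h0).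
  rewrite /g ler_normr => ih_ge0; apply/orP; right; lra.
move: far_below far_above; rewrite /= gap_zero add0r !ler_norml.
by move=> /andP[? _] /andP[? _]; lra.
Qed.

Lemma ln_nodes_le_berrutN m : ln (nodes m)%:R <= 8 * berrutN sawtooth (nodes m) (probe m).
Proof.
have ln_pow2 k : ln (2 ^ k)%:R = k%:R * ln (2 : R) by rewrite natrX lnXn // mulr_natl.
have ln_nodes : ln (nodes m)%:R = (4 + m + tooth_exp m)%:R * ln (2 : R).
  by rewrite -ln_pow2 /nodes /teeth (expnD 2 (4 + m)) (expnD 2 4 m).
have ln_teeth : (tooth_exp m)%:R * ln (2 : R) <= ln ((teeth m)%:R + 1).
  by rewrite -ln_pow2 ler_ln ?posrE ?ltr_wpDl ?ltr0n ?expn_gt0 // lerDl.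
have c_eq : (tooth_exp m)%:R = 8 * ((1024 * 4 ^ m)%:R + m%:R + 4) :> R.
  by rewrite /tooth_exp natrM (natrD _ (1024 * 4 ^ m + m) 4) (natrD _ (1024 * 4 ^ m) m).
have := berrutN_probe_ge m; move: ln_teeth.
rewrite ln_nodes (natrD _ (4 + m)) (natrD _ 4 m) c_eq.
have := @half_le_ln2 R; have := @ln2_le1 R.
move: (ln 2) ((1024 * 4 ^ m)%:R) (ler0n R (1024 * 4 ^ m)) (ler0n R m) => l K K_ge0 m_ge0.
move=> l_le1 l_ge ln_teeth N_ge.
have : 0 <= (K + m%:R + 4) * (l - 1 / 2) by rewrite mulr_ge0 //; lra.
have : 0 <= (4 + m%:R) * (1 - l) by rewrite mulr_ge0 //; lra.
lra.
Qed.

Lemma probe_not_node m : ~~ [exists k : 'I_(nodes m).+1, probe m == node R (nodes m) k].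
Proof.
apply/existsP => -[k /eqP]; rewrite node_nodes /probe.
have := nodes_sub_teeth_spacing m 8 isT; rewrite -/(block_idx m) /block_start.
move=> idx_spacing probe_node.
have /eqP : ((2 * block_idx m)%:R - (2 * k + 1)%:R) * spacing m = 0 :> R.
  by rewrite natrD !natrM; lra.
rewrite mulf_eq0 (gt_eqF (spacing_gt0 m)) orbF subr_eq0 eqr_nat.
by move/eqP/(congr1 odd); rewrite oddD !oddM.
Qed.

Lemma berrut_error_probe_ge m :
  1 / 16 <= (nodes m)%:R / ln (nodes m)%:R *
            `|berrut sawtooth (nodes m) (probe m) - sawtooth (probe m)|.
Proof.
rewrite /berrut (negbTE (probe_not_node m)).
rewrite sawtooth_eq0 ?subr0; last by apply: sawtooth_zeros_gap; exact: probe_gap.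
have := ln_nodes_le_berrutN m; have /andP[D_ge D_lt0] := berrutD_probe_bounds m.
have n_gt0 : 0 < (nodes m)%:R :> R by rewrite ltr0n nodes_gt0.
have ln_gt0 : 0 < ln (nodes m)%:R :> R.
  by rewrite ln_gt0 // ltr1n /nodes; have := teeth_gt0 m; have := expn_gt0 2 m; nia.
set n := (nodes m)%:R in n_gt0 ln_gt0 D_ge *; set Nv := berrutN _ _ _; set Dv := berrutD _ _.
move=> ln_le; have Nv_gt0 : 0 < Nv by lra.
rewrite normrM normfV (gtr0_norm Nv_gt0) (ltr0_norm D_lt0).
apply: (@le_trans _ _ (Nv / (2 * ln n))).
  by rewrite ler_pdivlMr ?mulr_gt0 //; lra.
have -> : Nv / (2 * ln n) = n / ln n * (Nv / (2 * n)).
  by field; rewrite !lt0r_neq0.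
rewrite ler_wpM2l ?divr_ge0 ?(ltW n_gt0) ?(ltW ln_gt0) // ler_wpM2l ?(ltW Nv_gt0) //.
by rewrite lef_pV2 ?posrE ?mulr_gt0 ?oppr_gt0 //; lra.
Qed.

End Sawtooth.

Lemma leq_nodes m : (m <= nodes m)%N.
Proof.
have := teeth_gt0 m; have : (m < 2 ^ m)%N by rewrite ltn_expl.
by rewrite /nodes; nia.
Qed.

Theorem mainTheorem1 (R : realType) :
  exists f : R -> R, lipschitz_on_I f /\
    (0 < limn_esup (fun n : nat =>
           ((n%:R / ln (n%:R : R))%:E * supnorm (fun x => (berrut f n x - f x)%R))%E))%E.
Proof.
exists sawtooth; split.
  by exists 1 => x y _ _; rewrite mul1r sawtooth_lipschitz.
set u := (fun n : nat => _).
apply: (@lt_le_trans _ _ (1 / 16 : R)%:E); first by rewrite lte_fin divr_gt0.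
rewrite limn_esup_lim; apply: lime_ge; first exact: is_cvg_esups.
apply: nearW => N; apply: (@le_trans _ _ (u (nodes N))); last first.
  by apply: ereal_sup_ubound; exists (nodes N) => //=; exact: leq_nodes.
have err_ge : ((1 / 16 : R)%:E <= ((nodes N)%:R / ln (nodes N)%:R)%:E *
    (`|berrut (@sawtooth R) (nodes N) (probe N) - sawtooth (probe N)|)%:E)%E.
  by rewrite -EFinM lee_fin berrut_error_probe_ge.
rewrite /u /=; apply: (le_trans err_ge); apply: lee_wpmul2l.
  by rewrite lee_fin divr_ge0 // ln_ge0 // ler1n nodes_gt0.
by apply: ereal_sup_ubound; exists (probe N) => //; exact: probe_in_interval.
Qed.
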